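(* Let $O$ be an object of $\mathsf{CRP}_{\mathcal{L}^{(t)}_{m,q}}$ and let $A$ be a Lazardian $O$-algebra. An $A$-algebra $B$ is an object of $\mathsf{CRP}_A$ if and only if (regarded as an $O$-algebra) it is an object of $\mathsf{CRP}_O$. In particular, restriction of scalars $\mathsf{Alg}_A\to\mathsf{Alg}_O$ restricts to a functor $\mathsf{CRP}_A\to\mathsf{CRP}_O$.
   Context: Fix a prime $p$, $t\in\mathbf{Z}$, $m\in\mathbf{N}\cup\{\infty\}$, $q>1$ a power of $p$, and $\mathcal{L}^{(t)}_{m,q}:=\mathbf{Z}[\omega_i^{q^{-\infty}}\mid1\le i\le m][[\pi]]/(p-\sum_{i=1}^m\omega_i^{q^t}\pi^i,\pi^{m+1})$ (with $\pi^{\infty+1}:=0$). For a ring $R$ receiving a ring map from $\mathcal{L}^{(t)}_{m,q}$ (so $\pi$ has an image in $R$), $\mathsf{CRP}_R$ is the full subcategory of $R$-algebras $B$ such that $B$ is $\pi B$-adically complete, $B/\pi B$ is a perfect $\mathbf{F}_p$-algebra, and the multiplication map $\pi R\otimes_RB\to B$ is injective. A Lazardian $O$-algebra is an $O$-algebra $A$ that is $\pi A$-adically complete and such that $\pi O\otimes_OA\to A$ is injective. *)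

From HB Require Import structures.
From mathcomp Require Import all_boot all_order all_algebra.
Set Implicit Arguments. Unset Strict Implicit. Unset Printing Implicit Defensive.
Import GRing.Theory.
Local Open Scope ring_scope.

(* Commutative rings are [comPzRingType] (the zero ring is allowed).
   An R-algebra B is a ring B with a ring map f : R -> B (in the theorem f
   is always an rmorphism); the image of pi in B is f pi. *)

Definition in_pow_ideal (B : comPzRingType) (piB : B) (n : nat) (x : B) : Prop :=
  exists c : B, x = piB ^+ n * c.

(* B is piB-adically complete (and separated): the canonical map
   B -> lim_n B / pi^n B is bijective.  An element of the inverse limit is
   represented by a sequence of lifts x n with x (n+1) = x n mod pi^n B. *)
Definition adically_complete (B : comPzRingType) (piB : B) : Prop :=
  forall x : nat -> B,
    (forall n, in_pow_ideal piB n (x n.+1 - x n)) ->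
    exists! b : B, forall n, in_pow_ideal piB n (b - x n).

(* B / piB is a perfect F_p-algebra: p = 0 in B/piB and the Frobenius
   x |-> x^p of B/piB is bijective. *)
Definition perfect_mod (p : nat) (B : comPzRingType) (piB : B) : Prop :=
  [/\ in_pow_ideal piB 1 (p%:R : B),
      (forall x : B, in_pow_ideal piB 1 (x ^+ p) -> in_pow_ideal piB 1 x)
    & (forall x : B, exists y : B, in_pow_ideal piB 1 (x - y ^+ p))].

Definition in_pi (R : comPzRingType) (piR : R) (r : R) : Prop :=
  exists s : R, r = piR * s.

Definition balanced (R B : comPzRingType) (f : R -> B) (piR : R)
    (G : zmodType) (beta : R -> B -> G) : Prop :=
  [/\ forall x x' b, in_pi piR x -> in_pi piR x' ->
         beta (x + x') b = beta x b + beta x' b,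
      forall x b b', in_pi piR x -> beta x (b + b') = beta x b + beta x b'
    & forall r x b, in_pi piR x -> beta (r * x) b = beta x (f r * b)].

(* The element  sum_i x_i (x) b_i  of  (pi R) (x)_R B  is zero, expressed
   through the universal property of the tensor product. *)
Definition tensor_zero (R B : comPzRingType) (f : R -> B) (piR : R)
    (s : seq (R * B)) : Prop :=
  forall (G : zmodType) (beta : R -> B -> G),
    balanced f piR beta -> \sum_(xb <- s) beta xb.1 xb.2 = 0.

(* The multiplication map  pi R (x)_R B -> B  is injective (every element of
   the tensor product is a finite sum of pure tensors). *)
Definition pi_tensor_injective (R B : comPzRingType) (f : R -> B) (piR : R)
    : Prop :=
  forall s : seq (R * B),
    (forall xb, xb \in s -> in_pi piR xb.1) ->
    \sum_(xb <- s) f xb.1 * xb.2 = 0 -> tensor_zero f piR s.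

(* B (an R-algebra via f) is an object of CRP_R, where piR is the image of
   pi in R. *)
Definition CRP (p : nat) (R B : comPzRingType) (piR : R) (f : R -> B) : Prop :=
  [/\ adically_complete (f piR), perfect_mod p (f piR)
    & pi_tensor_injective f piR].

Definition Lazardian (O A : comPzRingType) (piO : O) (f : O -> A) : Prop :=
  adically_complete (f piO) /\ pi_tensor_injective f piO.

From HB Require Import structures.
From mathcomp Require Import all_boot all_order all_algebra.
From Stdlib Require Import ClassicalEpsilon.
Set Implicit Arguments. Unset Strict Implicit.
Import GRing.Theory.
Local Open Scope ring_scope.

(* The completeness and perfectness conditions only involve the image of pi in
   B, which is the same whether B is viewed over A or over O.  For the tensor
   condition, injectivity of pi O (x)_O A -> A identifies pi A with
   pi O (x)_O A, so pi A (x)_A B = pi O (x)_O A (x)_A B = pi O (x)_O B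
   compatibly with the multiplication maps to B.  Concretely, an O-balanced
   map beta on pi O x B descends to the A-balanced map
   (pi c, b) |-> beta(pi, c b), which is well defined precisely because of
   that injectivity; conversely A-balanced maps restrict to O-balanced ones. *)

Definition pi_cofactor (R : comPzRingType) (t a : R) : R :=
  epsilon (inhabits 0) (fun c => a = t * c).

Lemma pi_cofactorP (R : comPzRingType) (t a : R) :
  in_pi t a -> a = t * pi_cofactor t a.
Proof. exact: epsilon_spec. Qed.

Lemma in_pi_refl (R : comPzRingType) (t : R) : in_pi t t.
Proof. by exists 1; rewrite mulr1. Qed.

Lemma in_pi_rmorph (R S : comPzRingType) (f : {rmorphism R -> S}) (t x : R) :
  in_pi t x -> in_pi (f t) (f x).
Proof. by case=> u ->; exists (f u); rewrite rmorphM. Qed.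

Lemma balancedB (R B : comPzRingType) (f : R -> B) (piR : R) (G : zmodType)
    (beta : R -> B -> G) (x : R) (b b' : B) :
  balanced f piR beta -> in_pi piR x -> beta x (b - b') = beta x b - beta x b'.
Proof.
by case=> _ beta_addr _ hx; apply/eqP; rewrite eq_sym subr_eq -beta_addr ?subrK.
Qed.

Section RestrictionOfScalars.

Variables (O A B : comPzRingType) (fA : {rmorphism O -> A}).
Variables (fB : {rmorphism A -> B}) (piO : O).

Lemma balanced_restrict (G : zmodType) (gamma : A -> B -> G) :
  balanced fB (fA piO) gamma ->
  balanced (fB \o fA) piO (fun x b => gamma (fA x) b).
Proof.
case=> gamma_addl gamma_addr gamma_scale; split.
- by move=> x x' b /(in_pi_rmorph fA) hx /(in_pi_rmorph fA) hx'; rewrite rmorphD gamma_addl.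
- by move=> x b b' /(in_pi_rmorph fA) hx; rewrite gamma_addr.
- by move=> r x b /(in_pi_rmorph fA) hx; rewrite rmorphM gamma_scale.
Qed.

Lemma pi_tensor_injective_extend :
  pi_tensor_injective (fB \o fA) piO -> pi_tensor_injective fB (fA piO).
Proof.
move=> injO s hs sum_s0 G gamma hgamma.
have [_ _ gamma_scale] := hgamma.
pose lift xb := (piO, fB (pi_cofactor (fA piO) xb.1) * xb.2).
have lift_term xb : in_pi (fA piO) xb.1 ->
    fB (fA piO) * (lift xb).2 = fB xb.1 * xb.2.
  by move=> hx; rewrite mulrA -rmorphM -pi_cofactorP.
have lift_zero : tensor_zero (fB \o fA) piO (map lift s).
  apply: injO; first by move=> xb /mapP [yb _ ->]; apply: in_pi_refl.
  rewrite big_map -[RHS]sum_s0 big_seq [RHS]big_seq.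
  by apply: eq_bigr => xb /hs /lift_term.
rewrite -[RHS](lift_zero G _ (balanced_restrict hgamma)) big_map.
rewrite big_seq [RHS]big_seq; apply: eq_bigr => xb /hs hx /=.
rewrite -gamma_scale; last exact: in_pi_refl.
by rewrite mulrC -pi_cofactorP.
Qed.

Hypothesis injA : pi_tensor_injective fA piO.

Lemma balanced_cofactor_eq (G : zmodType) (beta : O -> B -> G) (c c' : A) (b : B) :
  balanced (fB \o fA) piO beta -> fA piO * c = fA piO * c' ->
  beta piO (fB c * b) = beta piO (fB c' * b).
Proof.
move=> hbeta eq_cc'; have [beta_addl beta_addr beta_scale] := hbeta.
have hbetaA : balanced fA piO (fun x a => beta x (fB a * b)).
  split=> [x x' a hx hx' | x a a' hx | r x a hx]; first exact: beta_addl.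
  - by rewrite rmorphD mulrDl beta_addr.
  - by rewrite beta_scale //= rmorphM mulrA.
have zero_cc' : tensor_zero fA piO [:: (piO, c - c')].
  apply: injA => [xb | ]; first by rewrite mem_seq1 => /eqP ->; apply: in_pi_refl.
  by rewrite big_seq1 /= mulrBr eq_cc' subrr.
move: (zero_cc' G _ hbetaA).
rewrite big_seq1 /= rmorphB mulrBl (balancedB _ _ hbeta (in_pi_refl piO)).
by move/eqP; rewrite subr_eq0 => /eqP.
Qed.

Definition descend (G : zmodType) (beta : O -> B -> G) (a : A) (b : B) : G :=
  beta piO (fB (pi_cofactor (fA piO) a) * b).

Lemma descend_rmorph (G : zmodType) (beta : O -> B -> G) (x : O) (b : B) :
  balanced (fB \o fA) piO beta -> in_pi piO x -> descend beta (fA x) b = beta x b.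
Proof.
move=> hbeta [u ->]; have [_ _ beta_scale] := hbeta.
rewrite /descend (balanced_cofactor_eq (c' := fA u) _ hbeta); last first.
  by rewrite -pi_cofactorP rmorphM //; exists (fA u).
by rewrite [piO * u]mulrC beta_scale //; apply: in_pi_refl.
Qed.

Lemma balanced_descend (G : zmodType) (beta : O -> B -> G) :
  balanced (fB \o fA) piO beta -> balanced fB (fA piO) (descend beta).
Proof.
move=> hbeta; have [_ beta_addr _] := hbeta; have piO_pi := in_pi_refl piO.
have cofactorD a a' : in_pi (fA piO) a -> in_pi (fA piO) a' ->
    fA piO * pi_cofactor (fA piO) (a + a') =
    fA piO * (pi_cofactor (fA piO) a + pi_cofactor (fA piO) a').
  move=> ha ha'; rewrite mulrDr -!pi_cofactorP //.
  by case: ha => u ->; case: ha' => v ->; exists (u + v); rewrite mulrDr.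
have cofactorM r a : in_pi (fA piO) a ->
    fA piO * pi_cofactor (fA piO) (r * a) = fA piO * (r * pi_cofactor (fA piO) a).
  move=> ha; rewrite mulrCA -!pi_cofactorP //.
  by case: ha => u ->; exists (r * u); rewrite mulrCA.
split=> [a a' b ha ha' | a b b' _ | r a b ha]; rewrite /descend.
- by rewrite (balanced_cofactor_eq _ hbeta (cofactorD _ _ ha ha')) rmorphD mulrDl beta_addr.
- by rewrite mulrDr beta_addr.
- by rewrite (balanced_cofactor_eq _ hbeta (cofactorM r _ ha)) rmorphM mulrCA mulrA.
Qed.

Lemma pi_tensor_injective_restrict :
  pi_tensor_injective fB (fA piO) -> pi_tensor_injective (fB \o fA) piO.
Proof.
move=> injB s hs sum_s0 G beta hbeta.
have push_zero : tensor_zero fB (fA piO) [seq (fA xb.1, xb.2) | xb <- s].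
  apply: injB; last by rewrite big_map.
  by move=> xb /mapP [yb /hs hy ->]; apply: in_pi_rmorph.
rewrite -[RHS](push_zero G _ (balanced_descend hbeta)) big_map.
rewrite big_seq [RHS]big_seq; apply: eq_bigr => xb /hs hx /=.
by rewrite descend_rmorph.
Qed.

Lemma pi_tensor_injective_comp :
  pi_tensor_injective fB (fA piO) <-> pi_tensor_injective (fB \o fA) piO.
Proof.
split; [exact: pi_tensor_injective_restrict | exact: pi_tensor_injective_extend].
Qed.

End RestrictionOfScalars.

Theorem proposition5p1 (p : nat) (hp : prime p)
    (L : comPzRingType) (pi : L)
    (O : comPzRingType) (fO : {rmorphism L -> O})
    (hO : CRP p pi fO)
    (A : comPzRingType) (fA : {rmorphism O -> A})
    (hA : Lazardian (fO pi) fA)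
    (B : comPzRingType) (fB : {rmorphism A -> B}) :
  CRP p (fA (fO pi)) fB <-> CRP p (fO pi) (fB \o fA).
Proof.
have [_ injA] := hA.
have injB_iff := pi_tensor_injective_comp fB injA.
by split=> -[complete perfect injB]; split=> //; apply/injB_iff.
Qed.
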